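(* Let $P$ be a finite ranked poset of rank $n$ with minimum $\hat0$ and maximum $\hat1$. If $P$ has an $S$-labeling $\Lambda$, then there is a (permutation) action of the symmetric group $S_n$ on the set $\mathcal{M}(P)$ of maximal chains of $P$ satisfying $\Lambda(\pi\cdot c)=\pi\cdot\Lambda(c)$ for all $\pi\in S_n$ and $c\in\mathcal{M}(P)$, where $S_n$ acts on label sequences by permuting coordinates; and this action is local.
   Context: A labeling of $P$ is a map $\Lambda:\mathcal{M}(P)\to L^n$, $L$ a totally ordered set, written $\Lambda(c)=(\Lambda_1(c),\dots,\Lambda_n(c))$. It is an $S$-labeling if it is injective and for every maximal chain $c=(\hat0=w^0\lessdot w^1\lessdot\cdots\lessdot w^n=\hat1)$ and every $i\in[n-1]$ with $\Lambda_i(c)\neq\Lambda_{i+1}(c)$, there is a unique maximal chain $c'$ differing from $c$ only in the element of rank $i$ such that $\Lambda(c')$ is obtained from $\Lambda(c)$ by interchanging the entries in positions $i$ and $i+1$. $S_n$ acts on $L^n$ by permuting coordinates: $(\pi\cdot\lambda)_j=\lambda_{\pi^{-1}(j)}$. An action of $S_n$ on $\mathcal{M}(P)$ (or on the vector space $\mathbf{C}\mathcal{M}(P)$ with basis $\mathcal{M}(P)$) is local if for every adjacent transposition $\sigma_i=(i,i+1)$ and every maximal chain $m$, $\sigma_i(m)$ is a linear combination of maximal chains that differ from $m$ at most in the element of rank $i$. *)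

From HB Require Import structures.
From mathcomp Require Import all_boot all_order all_fingroup.
Set Implicit Arguments. Unset Strict Implicit. Unset Printing Implicit Defensive.
Import Order.TTheory.
Local Open Scope order_scope.

Definition covers {d} {P : finPOrderType d} (x y : P) : bool :=
  (x < y) && [forall z : P, ~~ ((x < z) && (z < y))].

Definition ranked_of_rank {d} {P : finPOrderType d} (bot top : P) (n : nat) : Prop :=
  exists rk : P -> nat,
    [/\ rk bot = 0%N, rk top = n & forall x y : P, covers x y -> rk y = (rk x).+1].

(* A maximal chain  bot = w^0 ⋖ w^1 ⋖ ... ⋖ w^n = top, stored as w : 'I_n.+1 -> P
   (w i is the element of rank i). *)
Definition is_mchain {d} {P : finPOrderType d} (bot top : P) (n : nat)
  (w : {ffun 'I_n.+1 -> P}) : bool :=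
  [&& w ord0 == bot, w ord_max == top &
      [forall i : 'I_n, covers (w (widen_ord (leqnSn n) i)) (w (lift ord0 i))]].

Definition mchain {d} {P : finPOrderType d} (bot top : P) (n : nat) :=
  {w : {ffun 'I_n.+1 -> P} | is_mchain bot top w}.

Definition perm_lab {T : Type} {n : nat} (pi : 'S_n) (lam : {ffun 'I_n -> T})
  : {ffun 'I_n -> T} := [ffun j => lam ((pi^-1)%g j)].

(* S-labeling (labels indexed 0..n-1; 0-indexed positions a, b = a+1 correspond
   to the paper's positions i, i+1 with i = a+1, and the element of rank i
   is the chain entry with index b). *)
Definition S_labeling {d} {P : finPOrderType d} (bot top : P) (n : nat)
  {dL} {L : orderType dL} (Lam : mchain bot top n -> {ffun 'I_n -> L}) : Prop :=
  injective Lam /\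
  forall (c : mchain bot top n) (a b : 'I_n), val b = (val a).+1 ->
    Lam c a != Lam c b ->
    exists! c' : mchain bot top n,
      (forall k : 'I_n.+1, val k != val b -> val c' k = val c k) /\
      Lam c' = perm_lab (tperm a b) (Lam c).

(* A (left) permutation action of S_n on a type M.  Mathcomp's product on
   permutations is (s * t) x = t (s x), so function composition pi ∘ sg is sg * pi. *)
Definition is_perm_action {n : nat} {M : Type} (act : 'S_n -> M -> M) : Prop :=
  (forall m, act 1%g m = m) /\
  (forall (pi sg : 'S_n) m, act pi (act sg m) = act (sg * pi)%g m).

(* Locality: the adjacent transposition (a, a+1) (paper: sigma_i, i = a+1)
   moves a chain only in its element of rank a+1. *)
Definition local_action {d} {P : finPOrderType d} (bot top : P) (n : nat)
  (act : 'S_n -> mchain bot top n -> mchain bot top n) : Prop :=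
  forall (a b : 'I_n), val b = (val a).+1 ->
    forall (m : mchain bot top n) (k : 'I_n.+1), val k != val b ->
      val (act (tperm a b) m) k = val m k.

(* Since Λ is injective, the required action is forced: π·c must be the chain
   whose labels are π·Λ(c).  It exists for every π because the set of
   permutations realized on the image of Λ is closed under products and, by the
   S-labeling axiom, contains the adjacent transpositions, which generate S_n.
   Locality is then the "differs only in rank i" clause of the axiom. *)

From mathcomp Require Import all_boot all_order all_fingroup.
Set Implicit Arguments. Unset Strict Implicit.
Local Open Scope order_scope.

Section PermLab.

Variables (T : Type) (n : nat).
Implicit Types (lam : {ffun 'I_n -> T}) (s t : 'S_n).

Lemma perm_lab1 lam : perm_lab 1%g lam = lam.
Proof. by apply/ffunP => j; rewrite ffunE invg1 perm1. Qed.

Lemma perm_labM s t lam : perm_lab (s * t)%g lam = perm_lab t (perm_lab s lam).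
Proof. by apply/ffunP => j; rewrite !ffunE invMg permM. Qed.

Lemma perm_lab_tperm_eq lam (a b : 'I_n) :
  lam a = lam b -> perm_lab (tperm a b) lam = lam.
Proof.
move=> eq_ab; apply/ffunP => j; rewrite ffunE tpermV.
by case: tpermP => [->|->|].
Qed.

End PermLab.

Lemma perm_adj_tperm_ind (n : nat) (Q : 'S_n -> Prop) :
  Q 1%g -> (forall s t, Q s -> Q t -> Q (s * t)%g) ->
  (forall a b : 'I_n, val b = (val a).+1 -> Q (tperm a b)) ->
  forall pi, Q pi.
Proof.
move=> Q1 QM Qadj.
have Qtperm_gap k (i j : 'I_n) : val j = (i + k.+1)%N -> Q (tperm i j).
  elim: k j => [|k IHk] j def_j; first by apply: Qadj; rewrite def_j addn1.
  have lt_m_n : (i + k.+1 < n)%N by rewrite (ltn_trans _ (ltn_ord j)) // def_j ltn_add2l.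
  pose m := Ordinal lt_m_n.
  have m_adj_j : val j = (val m).+1 by rewrite def_j addnS.
  have i_neq : (i != m) && (i != j).
    by rewrite -!(inj_eq val_inj) def_j /= -{1 3}(addn0 i) !eqn_add2l.
  case/andP: i_neq => ne_im ne_ij.
  have -> : tperm i j = (tperm i m ^ tperm m j)%g.
    by rewrite tpermJ tpermL tpermD // eq_sym.
  have Q_mj := Qadj _ _ m_adj_j.
  by rewrite /conjg tpermV; apply: (QM _ _ Q_mj (QM _ _ (IHk m erefl) Q_mj)).
have Qtperm (i j : 'I_n) : Q (tperm i j).
  wlog lt_ij : i j / (i < j)%N.
    move=> Qlt; case: (ltngtP i j) => [/Qlt | /Qlt | /val_inj ->] //.
      by rewrite tpermC.
    by rewrite tperm1.
  by apply: (Qtperm_gap (j - i).-1); rewrite prednK ?subn_gt0 // subnKC // ltnW.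
move=> pi; have [ts -> _] := prod_tpermP pi.
elim: ts => [|t ts IHts]; first by rewrite big_nil.
by rewrite big_cons; apply: (QM _ _ (Qtperm _ _) IHts).
Qed.

Section TransportAction.

Variables (n : nat) (M : finType) (T : eqType) (Lam : M -> {ffun 'I_n -> T}).

Definition realizable (pi : 'S_n) : Prop :=
  forall c, exists c', Lam c' = perm_lab pi (Lam c).

Lemma realizable1 : realizable 1%g.
Proof. by move=> c; exists c; rewrite perm_lab1. Qed.

Lemma realizableM s t : realizable s -> realizable t -> realizable (s * t)%g.
Proof.
move=> real_s real_t c; have [c1 def_c1] := real_s c; have [c2 def_c2] := real_t c1.
by exists c2; rewrite perm_labM -def_c1.
Qed.

Definition transport_act (pi : 'S_n) (c : M) : M :=
  odflt c [pick c' | Lam c' == perm_lab pi (Lam c)].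

Lemma transport_actE pi c :
  realizable pi -> Lam (transport_act pi c) = perm_lab pi (Lam c).
Proof.
move=> /(_ c) [c' def_c']; rewrite /transport_act.
by case: pickP => [_ /eqP // | /(_ c')]; rewrite def_c' eqxx.
Qed.

Hypotheses (Lam_inj : injective Lam) (all_realizable : forall pi, realizable pi).

Lemma transport_act_perm_action : is_perm_action transport_act.
Proof.
split=> [c | pi sg c]; apply: Lam_inj; rewrite !transport_actE //.
  by rewrite perm_lab1.
by rewrite perm_labM.
Qed.

End TransportAction.

Section SLabelingAction.

Variables (d : Order.disp_t) (P : finPOrderType d) (bot top : P) (n : nat).
Variables (dL : Order.disp_t) (L : orderType dL).
Variables (Lam : mchain bot top n -> {ffun 'I_n -> L}) (hS : S_labeling Lam).

Lemma S_labeling_realizable_adj (a b : 'I_n) :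
  val b = (val a).+1 -> realizable Lam (tperm a b).
Proof.
move=> ab_adj c; case: (eqVneq (Lam c a) (Lam c b)) => [eq_ab | ne_ab].
  by exists c; rewrite perm_lab_tperm_eq.
by have [c' [[_ def_c'] _]] := hS.2 c a b ab_adj ne_ab; exists c'.
Qed.

Lemma S_labeling_realizable pi : realizable Lam pi.
Proof.
apply: perm_adj_tperm_ind pi; [exact: realizable1 | exact: realizableM |].
exact: S_labeling_realizable_adj.
Qed.

Lemma transport_act_local : local_action (transport_act Lam).
Proof.
move=> a b ab_adj m k ne_kb.
have actE c' : Lam c' = perm_lab (tperm a b) (Lam m) -> transport_act Lam (tperm a b) m = c'.
  move=> def_c'; apply: (proj1 hS).
  by rewrite def_c' transport_actE //; apply: S_labeling_realizable.
case: (eqVneq (Lam m a) (Lam m b)) => [eq_ab | ne_ab].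
  by rewrite (actE m) // perm_lab_tperm_eq.
have [c' [[same_c' def_c'] _]] := hS.2 m a b ab_adj ne_ab.
by rewrite (actE c' def_c'); apply: same_c'.
Qed.

End SLabelingAction.

Theorem theorem4p1 (d : Order.disp_t) (P : finPOrderType d) (bot top : P) (n : nat)
  (hbot : forall x : P, bot <= x) (htop : forall x : P, x <= top)
  (hrank : ranked_of_rank bot top n)
  (dL : Order.disp_t) (L : orderType dL)
  (Lam : mchain bot top n -> {ffun 'I_n -> L})
  (hS : S_labeling Lam) :
  exists act : 'S_n -> mchain bot top n -> mchain bot top n,
    [/\ is_perm_action act,
        (forall (pi : 'S_n) (c : mchain bot top n), Lam (act pi c) = perm_lab pi (Lam c))
      & local_action act].
Proof.
exists (transport_act Lam); split.
- exact: transport_act_perm_action hS.1 (S_labeling_realizable hS).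
- by move=> pi c; apply/transport_actE/S_labeling_realizable.
- exact: transport_act_local.
Qed.
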